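(* Let $\langle X,d\rangle$ be a metric space with completion $\langle\widehat{X},\widehat{d}\rangle$. The following are equivalent: (1) $\widehat{X}$ is cofinally Bourbaki quasi-complete; (2) $\widehat{X}$ is cofinally Bourbaki complete and every CBC-regular function from $X$ to any metric space $\langle Y,\rho\rangle$ maps cofinally Bourbaki quasi-Cauchy sequences to cofinally Bourbaki-Cauchy sequences; (3) $\widehat{X}$ is cofinally Bourbaki complete and every real-valued CBC-regular function on $X$ maps cofinally Bourbaki quasi-Cauchy sequences to cofinally Bourbaki-Cauchy sequences; (4) $\widehat{X}$ is cofinally Bourbaki complete and every cofinally Bourbaki quasi-Cauchy sequence in $X$ is cofinally Bourbaki-Cauchy.
   Context: For $\varepsilon>0$, an $\varepsilon$-chain joining $x,y$ is a finite sequence $x=x_0,\dots,x_n=y$ with consecutive distances $<\varepsilon$. A sequence $\langle x_n\rangle$ in a metric space is cofinally Bourbaki quasi-Cauchy if for every $\varepsilon>0$ there is an infinite $N_\varepsilon\subseteq\mathbb{N}$ such that any $x_j,x_k$ with $j,k\in N_\varepsilon$ can be joined by an $\varepsilon$-chain in that space; a space is cofinally Bourbaki quasi-complete if every such sequence has a cluster point. In a metric space $\langle Y,\rho\rangle$ let $S^1_\rho(p,\varepsilon)$ be the open $\varepsilon$-ball about $p$ and $S^{m}_\rho(p,\varepsilon)=\{y:\rho(y,S^{m-1}_\rho(p,\varepsilon))<\varepsilon\}$; a sequence $\langle y_n\rangle$ is cofinally Bourbaki-Cauchy if for every $\varepsilon>0$ there exist an infinite $N_\varepsilon\subseteq\mathbb{N}$,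 $m\in\mathbb{N}$, $p\in Y$ with $y_n\in S^m_\rho(p,\varepsilon)$ for all $n\in N_\varepsilon$. A space is cofinally Bourbaki complete if every cofinally Bourbaki-Cauchy sequence has a cluster point. A function is CBC-regular if it maps cofinally Bourbaki-Cauchy sequences to cofinally Bourbaki-Cauchy sequences. *)

From Stdlib Require Import Reals Lra.
Open Scope R_scope.

Record is_metric (T : Type) (d : T -> T -> R) : Prop := {
  met_nonneg : forall x y, 0 <= d x y;
  met_zero   : forall x y, d x y = 0 <-> x = y;
  met_sym    : forall x y, d x y = d y x;
  met_tri    : forall x y z, d x z <= d x y + d y z
}.

Definition infinite_nat (N : nat -> Prop) : Prop :=
  forall m : nat, exists n : nat, (m <= n)%nat /\ N n.

Definition eps_chain {T : Type} (d : T -> T -> R) (eps : R) (x y : T) : Prop :=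
  exists (n : nat) (c : nat -> T),
    c 0%nat = x /\ c n = y /\ forall i, (i < n)%nat -> d (c i) (c (S i)) < eps.

Definition cofinally_Bourbaki_quasi_Cauchy {T : Type} (d : T -> T -> R)
  (x : nat -> T) : Prop :=
  forall eps, 0 < eps ->
    exists N : nat -> Prop, infinite_nat N /\
      forall j k, N j -> N k -> eps_chain d eps (x j) (x k).

Definition cluster_point {T : Type} (d : T -> T -> R) (x : nat -> T) (p : T) : Prop :=
  forall eps, 0 < eps -> forall m : nat, exists n, (m <= n)%nat /\ d (x n) p < eps.

Definition has_cluster_point {T : Type} (d : T -> T -> R) (x : nat -> T) : Prop :=
  exists p, cluster_point d x p.

Definition cofinally_Bourbaki_quasi_complete (T : Type) (d : T -> T -> R) : Prop :=
  forall x : nat -> T, cofinally_Bourbaki_quasi_Cauchy d x -> has_cluster_point d x.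

(* Iterated enlargements: Siter d p eps m = S^{m+1}(p, eps).
   S^1 = open ball; S^{m+1} = {y | rho(y, S^m) < eps}, where
   rho(y, A) < eps  iff  some a in A has rho(y, a) < eps (inf < eps). *)
Fixpoint Siter {T : Type} (d : T -> T -> R) (p : T) (eps : R) (m : nat) (y : T) : Prop :=
  match m with
  | O => d p y < eps
  | S m' => exists a, Siter d p eps m' a /\ d y a < eps
  end.

Definition cofinally_Bourbaki_Cauchy {T : Type} (d : T -> T -> R) (x : nat -> T) : Prop :=
  forall eps, 0 < eps ->
    exists (N : nat -> Prop) (m : nat) (p : T), infinite_nat N /\
      forall n, N n -> Siter d p eps m (x n).

Definition cofinally_Bourbaki_complete (T : Type) (d : T -> T -> R) : Prop :=
  forall x : nat -> T, cofinally_Bourbaki_Cauchy d x -> has_cluster_point d x.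

Definition CBC_regular {X Y : Type} (d : X -> X -> R) (rho : Y -> Y -> R)
  (f : X -> Y) : Prop :=
  forall x : nat -> X, cofinally_Bourbaki_Cauchy d x ->
    cofinally_Bourbaki_Cauchy rho (fun n => f (x n)).

Definition cauchy_seq {T : Type} (d : T -> T -> R) (x : nat -> T) : Prop :=
  forall eps, 0 < eps -> exists N, forall m n, (N <= m)%nat -> (N <= n)%nat -> d (x m) (x n) < eps.

Definition converges_to {T : Type} (d : T -> T -> R) (x : nat -> T) (p : T) : Prop :=
  forall eps, 0 < eps -> exists N, forall n, (N <= n)%nat -> d (x n) p < eps.

Definition complete_metric (T : Type) (d : T -> T -> R) : Prop :=
  forall x : nat -> T, cauchy_seq d x -> exists p, converges_to d x p.

Definition is_completion {X Xh : Type} (d : X -> X -> R) (dh : Xh -> Xh -> R)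
  (i : X -> Xh) : Prop :=
  is_metric Xh dh /\ complete_metric Xh dh /\
  (forall x y, dh (i x) (i y) = d x y) /\
  (forall z eps, 0 < eps -> exists x, dh z (i x) < eps).

Definition real_dist (a b : R) : R := Rabs (a - b).

From Stdlib Require Import Reals Lra Lia Wf_nat Classical ClassicalEpsilon.
Open Scope R_scope.

(* A cofinally Bourbaki quasi-Cauchy sequence of Xh can be replaced by a nearby
   sequence of X, and eps-chains of Xh by slightly coarser chains of X; this gives
   (1) <-> (4).  For (3) -> (4): if x is quasi-Cauchy but not cofinally Bourbaki-Cauchy
   at scale e0, let f y be the least k with y in S^(k+1)(x_j, e0) for some j <= k.
   Across S^(m+1)(y, e0) the value of f grows by at most m+1, so f is bounded on every
   e0-enlargement witnessing that a sequence is cofinally Bourbaki-Cauchy, and f is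
   CBC-regular; but by pigeonhole f is unbounded on every infinite set of terms of x,
   so f does not carry x to a cofinally Bourbaki-Cauchy sequence of reals. *)

Lemma inv_INR_S_eventually_lt (e : R) :
  0 < e -> exists M : nat, forall n, (M <= n)%nat -> / INR (S n) < e.
Proof.
  intros He. destruct (archimed_cor1 e He) as [M [HM HM0]].
  exists M. intros n Hn. apply Rle_lt_trans with (/ INR M); [|exact HM].
  apply Rinv_le_contravar; [apply lt_0_INR; exact HM0 | apply le_INR; lia].
Qed.

Lemma eps_chain_refl {T : Type} (d : T -> T -> R) e x : eps_chain d e x x.
Proof. exists 0%nat, (fun _ => x). repeat split; intros; lia. Qed.

Lemma eps_chain_snoc {T : Type} (d : T -> T -> R) e x a y :
  eps_chain d e x a -> d a y < e -> eps_chain d e x y.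
Proof.
  intros [n [c [H0 [Hn Hs]]]] Hy.
  exists (S n), (fun t => if Nat.leb t n then c t else y). split; [|split].
  - exact H0.
  - replace (Nat.leb (S n) n) with false by (symmetry; apply Nat.leb_gt; lia). reflexivity.
  - intros t Ht. replace (Nat.leb t n) with true by (symmetry; apply Nat.leb_le; lia).
    destruct (Nat.leb_spec (S t) n).
    + apply Hs. lia.
    + replace t with n by lia. rewrite Hn. exact Hy.
Qed.

Section Enlargements.

Variables (T : Type) (d : T -> T -> R).
Hypothesis hm : is_metric T d.

Lemma dist_self x : d x x = 0.
Proof. apply (met_zero _ _ hm). reflexivity. Qed.

Lemma Siter_radius_pos p e m y : Siter d p e m y -> 0 < e.
Proof.
  revert y; induction m as [|m IH]; simpl; intros y H.
  - pose proof (met_nonneg _ _ hm p y). lra.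
  - destruct H as [a [Ha _]]. exact (IH a Ha).
Qed.

Lemma Siter_succ p e m y : Siter d p e m y -> Siter d p e (S m) y.
Proof.
  intros H. exists y. split; [exact H|]. rewrite dist_self.
  exact (Siter_radius_pos p e m y H).
Qed.

Lemma Siter_mono p e m m' y : (m <= m')%nat -> Siter d p e m y -> Siter d p e m' y.
Proof. induction 1; auto using Siter_succ. Qed.

Lemma Siter_cons p b e m y : d p b < e -> Siter d b e m y -> Siter d p e (S m) y.
Proof.
  intros Hpb. revert y; induction m as [|m IH]; simpl; intros y H.
  - exists b. split; [exact Hpb|]. rewrite (met_sym _ _ hm). exact H.
  - destruct H as [a [Ha Hya]]. exists a. split; [exact (IH a Ha)|exact Hya].
Qed.

Lemma Siter_sym p e m y : Siter d p e m y -> Siter d y e m p.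
Proof.
  revert y; induction m as [|m IH]; simpl; intros y H.
  - rewrite (met_sym _ _ hm). exact H.
  - destruct H as [a [Ha Hya]]. exact (Siter_cons y a e m p Hya (IH a Ha)).
Qed.

Lemma Siter_trans p q e m m' y :
  Siter d p e m q -> Siter d q e m' y -> Siter d p e (S (m' + m)) y.
Proof.
  intros Hq. revert y; induction m' as [|m' IH]; simpl; intros y H.
  - exists q. split; [exact Hq|]. rewrite (met_sym _ _ hm). exact H.
  - destruct H as [a [Ha Hya]]. exists a. split; [exact (IH a Ha)|exact Hya].
Qed.

Lemma Siter_dist_lt p e m y : Siter d p e m y -> d p y < INR (S m) * e.
Proof.
  revert y; induction m as [|m IH]; intros y H.
  - simpl in *. lra.
  - destruct H as [a [Ha Hya]]. specialize (IH a Ha).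
    pose proof (met_tri _ _ hm p a y). rewrite (met_sym _ _ hm y a) in Hya.
    rewrite S_INR. lra.
Qed.

Lemma Siter_eps_chain p e m y : Siter d p e m y -> eps_chain d e p y.
Proof.
  revert y; induction m as [|m IH]; simpl; intros y H.
  - exact (eps_chain_snoc d e p p y (eps_chain_refl d e p) H).
  - destruct H as [a [Ha Hya]]. apply (eps_chain_snoc d e p a y (IH a Ha)).
    rewrite (met_sym _ _ hm). exact Hya.
Qed.

Lemma eps_chain_Siter e x y : 0 < e -> eps_chain d e x y -> exists m, Siter d x e m y.
Proof.
  intros He [n [c [H0 [Hn Hs]]]].
  destruct n as [|n].
  - exists 0%nat. simpl. rewrite <- H0, <- Hn, dist_self. exact He.
  - exists n. rewrite <- Hn.
    assert (Hall : forall t, (t < S n)%nat -> Siter d x e t (c (S t))).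
    { induction t as [|t IH]; intros Ht; simpl.
      - rewrite <- H0. apply Hs. lia.
      - exists (c (S t)). split; [apply IH; lia|].
        rewrite (met_sym _ _ hm). apply Hs. lia. }
    apply Hall. lia.
Qed.

Lemma CBC_CBqC x : cofinally_Bourbaki_Cauchy d x -> cofinally_Bourbaki_quasi_Cauchy d x.
Proof.
  intros H e He. destruct (H e He) as [N [m [p [HN Hall]]]].
  exists N. split; [exact HN|]. intros j k Hj Hk.
  apply (Siter_eps_chain _ _ (S (m + m))).
  exact (Siter_trans _ p _ _ _ _ (Siter_sym _ _ _ _ (Hall j Hj)) (Hall k Hk)).
Qed.

Lemma quasi_complete_complete :
  cofinally_Bourbaki_quasi_complete T d -> cofinally_Bourbaki_complete T d.
Proof. intros H x Hx. exact (H x (CBC_CBqC x Hx)). Qed.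

Lemma cluster_point_of_close u v q :
  (forall n, d (u n) (v n) < / INR (S n)) -> cluster_point d v q -> cluster_point d u q.
Proof.
  intros Huv Hq e He m. destruct (inv_INR_S_eventually_lt (e / 2)) as [M HM]; [lra|].
  destruct (Hq (e / 2) ltac:(lra) (max m M)) as [n [Hn Hd]].
  exists n. split; [lia|].
  pose proof (met_tri _ _ hm (u n) (v n) q). specialize (Huv n). specialize (HM n ltac:(lia)).
  lra.
Qed.

End Enlargements.

Section Isometry.

Variables (X Y : Type) (dX : X -> X -> R) (dY : Y -> Y -> R) (i : X -> Y).
Hypothesis hi : forall x y, dY (i x) (i y) = dX x y.

Lemma Siter_isometry p e m y : Siter dX p e m y -> Siter dY (i p) e m (i y).
Proof.
  revert y; induction m as [|m IH]; simpl; intros y H.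
  - rewrite hi. exact H.
  - destruct H as [a [Ha Hya]]. exists (i a). rewrite hi. auto.
Qed.

Lemma eps_chain_isometry e x y : eps_chain dX e x y -> eps_chain dY e (i x) (i y).
Proof.
  intros [n [c [H0 [Hn Hs]]]]. exists n, (fun t => i (c t)).
  split; [congruence|]. split; [congruence|].
  intros t Ht. rewrite hi. exact (Hs t Ht).
Qed.

Lemma CBqC_isometry x :
  cofinally_Bourbaki_quasi_Cauchy dX x ->
  cofinally_Bourbaki_quasi_Cauchy dY (fun n => i (x n)).
Proof.
  intros H e He. destruct (H e He) as [N [HN Hch]].
  exists N. split; [exact HN|]. intros j k Hj Hk.
  exact (eps_chain_isometry e _ _ (Hch j k Hj Hk)).
Qed.

Lemma CBC_isometry x :
  cofinally_Bourbaki_Cauchy dX x -> cofinally_Bourbaki_Cauchy dY (fun n => i (x n)).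
Proof.
  intros H e He. destruct (H e He) as [N [m [p [HN Hall]]]].
  exists N, m, (i p). split; [exact HN|]. intros n Hn. exact (Siter_isometry _ _ _ _ (Hall n Hn)).
Qed.

Hypothesis hmX : is_metric X dX.
Hypothesis hmY : is_metric Y dY.
Hypothesis hdense : forall z e, 0 < e -> exists x, dY z (i x) < e.

Lemma Siter_dense_approx q e m w p y δ :
  Siter dY q e m w -> dY q (i p) < δ -> dY w (i y) < δ -> Siter dX p (e + 2 * δ) m y.
Proof.
  revert w y; induction m as [|m IH]; intros w y H Hp Hy; simpl in *.
  - rewrite <- hi.
    pose proof (met_tri _ _ hmY (i p) q (i y)).
    pose proof (met_tri _ _ hmY q w (i y)).
    rewrite (met_sym _ _ hmY (i p) q) in *. lra.
  - destruct H as [a [Ha Hwa]].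
    assert (Hδ : 0 < δ) by (pose proof (met_nonneg _ _ hmY q (i p)); lra).
    destruct (hdense a δ Hδ) as [a' Ha'].
    exists a'. split; [exact (IH a a' Ha Hp Ha')|].
    rewrite <- hi.
    pose proof (met_tri _ _ hmY (i y) w (i a')).
    pose proof (met_tri _ _ hmY w a (i a')).
    rewrite (met_sym _ _ hmY (i y) w) in *. lra.
Qed.

Lemma CBqC_CBC_of_dense_quasi_complete x :
  cofinally_Bourbaki_quasi_complete Y dY ->
  cofinally_Bourbaki_quasi_Cauchy dX x -> cofinally_Bourbaki_Cauchy dX x.
Proof.
  intros HY Hx. destruct (HY _ (CBqC_isometry x Hx)) as [q Hq].
  intros e He. destruct (hdense q (e / 2)) as [p Hp]; [lra|].
  exists (fun n => dY (i (x n)) q < e / 2), 0%nat, p. split.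
  - intros m. destruct (Hq (e / 2) ltac:(lra) m) as [n [Hmn Hn]]. exists n. auto.
  - intros n Hn. simpl. rewrite <- hi.
    pose proof (met_tri _ _ hmY (i p) q (i (x n))).
    rewrite (met_sym _ _ hmY (i p) q), (met_sym _ _ hmY q (i (x n))) in *. lra.
Qed.

Lemma CBqC_of_close_CBqC z x :
  cofinally_Bourbaki_quasi_Cauchy dY z ->
  (forall n, dY (z n) (i (x n)) < / INR (S n)) ->
  cofinally_Bourbaki_quasi_Cauchy dX x.
Proof.
  intros Hz Hx e He. destruct (Hz (e / 2)) as [N [HN Hch]]; [lra|].
  destruct (inv_INR_S_eventually_lt (e / 4)) as [M HM]; [lra|].
  exists (fun n => N n /\ (M <= n)%nat). split.
  - intros m. destruct (HN (max m M)) as [n [Hn HNn]]. exists n. split; [lia|split; [auto|lia]].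
  - intros j k [Hj Hj'] [Hk Hk'].
    destruct (eps_chain_Siter _ _ hmY (e / 2) _ _ ltac:(lra) (Hch j k Hj Hk)) as [m Hm].
    apply (Siter_eps_chain _ _ hmX _ _ m).
    replace e with (e / 2 + 2 * (e / 4)) by field.
    apply (Siter_dense_approx (z j) (e / 2) m (z k)); [exact Hm| |].
    + specialize (Hx j). specialize (HM j Hj'). lra.
    + specialize (Hx k). specialize (HM k Hk'). lra.
Qed.

Lemma quasi_complete_of_dense_complete :
  cofinally_Bourbaki_complete Y dY ->
  (forall x, cofinally_Bourbaki_quasi_Cauchy dX x -> cofinally_Bourbaki_Cauchy dX x) ->
  cofinally_Bourbaki_quasi_complete Y dY.
Proof.
  intros HY HX z Hz.
  assert (Happrox : forall n, exists a, dY (z n) (i a) < / INR (S n)).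
  { intros n. apply hdense, Rinv_0_lt_compat, lt_0_INR. lia. }
  destruct (choice _ Happrox) as [x Hx].
  destruct (HY _ (CBC_isometry x (HX x (CBqC_of_close_CBqC z x Hz Hx)))) as [q Hq].
  exists q. exact (cluster_point_of_close _ _ hmY z _ q Hx Hq).
Qed.

End Isometry.

Lemma real_dist_metric : is_metric R real_dist.
Proof.
  unfold real_dist; constructor.
  - intros x y. apply Rabs_pos.
  - intros x y; split; intros H.
    + destruct (Req_dec (x - y) 0) as [E|E]; [lra|]. now apply Rabs_no_R0 in E.
    + subst. replace (y - y) with 0 by ring. apply Rabs_R0.
  - intros x y. apply Rabs_minus_sym.
  - intros x y z. replace (x - z) with ((x - y) + (y - z)) by ring. apply Rabs_triang.
Qed.

Lemma Siter_real_nonneg e M y :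
  0 < e -> 0 <= y < INR (S M) * (e / 2) -> Siter real_dist 0 e M y.
Proof.
  intros He. revert y; induction M as [|M IH]; intros y [Hy0 HyM].
  - simpl in *. unfold real_dist. rewrite Rabs_minus_sym, Rabs_right; lra.
  - destruct (Rlt_dec y (INR (S M) * (e / 2))) as [Hlt|Hge].
    + apply (Siter_succ _ _ real_dist_metric). apply IH. lra.
    + apply Rnot_lt_le in Hge. rewrite S_INR in HyM.
      assert (HM1 : 1 <= INR (S M)) by (rewrite S_INR; pose proof (pos_INR M); lra).
      exists (y - e / 2). split.
      * apply IH. split; nra.
      * unfold real_dist. replace (y - (y - e / 2)) with (e / 2) by ring.
        rewrite Rabs_right; lra.
Qed.

Lemma real_interval_Siter e K :
  0 < e -> exists M, forall y, 0 <= y <= K -> Siter real_dist 0 e M y.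
Proof.
  intros He. destruct (INR_unbounded (2 * K / e)) as [M HM].
  exists M. intros y Hy. apply (Siter_real_nonneg e M y He).
  assert (HK : K < INR M * (e / 2)).
  { apply Rmult_gt_compat_r with (r := e / 2) in HM; [|lra].
    replace (2 * K / e * (e / 2)) with K in HM by (field; lra). lra. }
  rewrite S_INR. lra.
Qed.

Definition least_nat (P : nat -> Prop) : nat :=
  match excluded_middle_informative (exists k, P k) with
  | left _ => epsilon (inhabits 0%nat) (fun k => P k /\ forall k', P k' -> (k <= k')%nat)
  | right _ => 0%nat
  end.

Lemma least_nat_spec (P : nat -> Prop) :
  (exists k, P k) -> P (least_nat P) /\ forall k, P k -> (least_nat P <= k)%nat.
Proof.
  intros H. unfold least_nat. destruct (excluded_middle_informative _) as [_|]; [|contradiction].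
  apply epsilon_spec.
  destruct (dec_inh_nat_subset_has_unique_least_element P (fun n => classic (P n)) H)
    as [k [Hk _]].
  exists k. exact Hk.
Qed.

Lemma least_nat_le (P : nat -> Prop) k : P k -> (least_nat P <= k)%nat.
Proof. intros H. apply least_nat_spec; eauto. Qed.

Lemma least_nat_empty (P : nat -> Prop) : ~ (exists k, P k) -> least_nat P = 0%nat.
Proof.
  intros H. unfold least_nat. destruct (excluded_middle_informative _); [contradiction|reflexivity].
Qed.

Lemma infinite_pigeonhole (Q : nat -> nat -> Prop) M : forall N : nat -> Prop,
  infinite_nat N -> (forall n, N n -> exists j, (j <= M)%nat /\ Q j n) ->
  exists j, (j <= M)%nat /\ infinite_nat (fun n => N n /\ Q j n).
Proof.
  induction M as [|M IH]; intros N HN HQ.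
  - exists 0%nat. split; [lia|]. intros m. destruct (HN m) as [n [Hmn Hn]].
    exists n. split; [exact Hmn|]. split; [exact Hn|].
    destruct (HQ n Hn) as [j [Hj Hq]]. replace 0%nat with j by lia. exact Hq.
  - destruct (classic (infinite_nat (fun n => N n /\ Q (S M) n))) as [Hinf|Hfin].
    { exists (S M). split; [lia|exact Hinf]. }
    apply not_all_ex_not in Hfin as [b Hb].
    destruct (IH (fun n => N n /\ (b <= n)%nat)) as [j [Hj Hinf]].
    + intros m. destruct (HN (max m b)) as [n [Hmn Hn]].
      exists n. split; [lia|split; [exact Hn|lia]].
    + intros n [Hn Hbn]. destruct (HQ n Hn) as [j [Hj Hq]].
      destruct (Nat.eq_dec j (S M)) as [->|Hne].
      * exfalso. apply Hb. exists n. auto.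
      * exists j. split; [lia|exact Hq].
    + exists j. split; [lia|]. intros m. destruct (Hinf m) as [n [Hmn [[Hn _] Hq]]].
      exists n. auto.
Qed.

Section LevelFunction.

Variables (X : Type) (d : X -> X -> R) (x : nat -> X) (e0 : R).
Hypothesis hd : is_metric X d.

Definition reaches (y : X) (k : nat) : Prop :=
  exists j, (j <= k)%nat /\ Siter d (x j) e0 k y.

Definition level (y : X) : R := INR (least_nat (reaches y)).

Lemma reaches_mono y k k' : (k <= k')%nat -> reaches y k -> reaches y k'.
Proof.
  intros Hk [j [Hj Hs]]. exists j. split; [lia|]. exact (Siter_mono _ _ hd _ _ _ _ _ Hk Hs).
Qed.

Lemma reaches_Siter y y' m k : Siter d y e0 m y' -> reaches y k -> reaches y' (S (m + k)).
Proof.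
  intros Hy [j [Hj Hs]]. exists j. split; [lia|]. exact (Siter_trans _ _ hd _ _ _ _ _ _ Hs Hy).
Qed.

Lemma least_reaches_Siter y y' m :
  Siter d y e0 m y' -> (least_nat (reaches y') <= S (m + least_nat (reaches y)))%nat.
Proof.
  intros Hy. destruct (classic (exists k, reaches y k)) as [Hne|Hempty].
  - apply least_nat_le, (reaches_Siter y), least_nat_spec; assumption.
  - rewrite least_nat_empty; [lia|].
    intros [k Hk]. apply Hempty. exists (S (m + k)).
    exact (reaches_Siter y' y m k (Siter_sym _ _ hd _ _ _ _ Hy) Hk).
Qed.

Hypothesis he0 : 0 < e0.

Lemma level_CBC_regular : CBC_regular d real_dist level.
Proof.
  intros w Hw e He. destruct (Hw e0 he0) as [N [m [q [HN Hq]]]].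
  destruct (HN 0%nat) as [n0 [_ Hn0]].
  set (K := S (S (m + m) + least_nat (reaches (w n0)))).
  destruct (real_interval_Siter e (INR K) He) as [M HM].
  exists N, M, 0. split; [exact HN|]. intros n Hn. apply HM. split; [apply pos_INR|].
  apply le_INR, least_reaches_Siter.
  exact (Siter_trans _ _ hd _ _ _ _ _ _ (Siter_sym _ _ hd _ _ _ _ (Hq n0 Hn0)) (Hq n Hn)).
Qed.

Lemma reaches_self n : reaches (x n) n.
Proof.
  exists n. split; [lia|]. apply (Siter_mono _ _ hd _ _ 0%nat); [lia|].
  simpl. rewrite (dist_self _ _ hd). exact he0.
Qed.

Lemma level_not_CBC :
  (forall N m p, infinite_nat N -> ~ (forall n, N n -> Siter d p e0 m (x n))) ->
  ~ cofinally_Bourbaki_Cauchy real_dist (fun n => level (x n)).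
Proof.
  intros Hfar H. destruct (H 1 Rlt_0_1) as [N [m [p [HN Hall]]]].
  destruct (INR_unbounded (Rabs p + INR (S m))) as [M HM].
  assert (Hcover : forall n, N n -> exists j, (j <= M)%nat /\ Siter d (x j) e0 M (x n)).
  { intros n Hn.
    pose proof (Siter_dist_lt _ _ real_dist_metric _ _ _ _ (Hall n Hn)) as Hlt.
    unfold real_dist, level in Hlt. rewrite Rmult_1_r, Rabs_minus_sym in Hlt.
    pose proof (Rle_abs (INR (least_nat (reaches (x n))) - p)).
    pose proof (Rle_abs p).
    assert (HL : (least_nat (reaches (x n)) <= M)%nat) by (apply INR_le; lra).
    destruct (reaches_mono _ _ _ HL (proj1 (least_nat_spec _ (ex_intro _ n (reaches_self n)))))
      as [j Hj].
    exists j. exact Hj. }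
  destruct (infinite_pigeonhole (fun j n => Siter d (x j) e0 M (x n)) M N HN Hcover)
    as [j [_ Hinf]].
  apply (Hfar _ M (x j) Hinf). intros n [_ Hn]. exact Hn.
Qed.

End LevelFunction.

Lemma CBqC_CBC_of_real_regular (X : Type) (d : X -> X -> R) (hd : is_metric X d) :
  (forall f : X -> R, CBC_regular d real_dist f ->
     forall x, cofinally_Bourbaki_quasi_Cauchy d x ->
       cofinally_Bourbaki_Cauchy real_dist (fun n => f (x n))) ->
  forall x, cofinally_Bourbaki_quasi_Cauchy d x -> cofinally_Bourbaki_Cauchy d x.
Proof.
  intros Hreal x Hx. apply NNPP. intros Hnot.
  apply not_all_ex_not in Hnot as [e0 He0]. apply imply_to_and in He0 as [He0 Hfar].
  apply (level_not_CBC X d x e0 hd He0).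
  - intros N m p HN Hall. apply Hfar. exists N, m, p. auto.
  - exact (Hreal _ (level_CBC_regular X d x e0 hd He0) x Hx).
Qed.

Theorem mainTheorem11 (X : Type) (d : X -> X -> R) (Xh : Type) (dh : Xh -> Xh -> R)
  (i : X -> Xh) (hd : is_metric X d) (hcomp : is_completion d dh i) :
  let P1 := cofinally_Bourbaki_quasi_complete Xh dh in
  let P2 := cofinally_Bourbaki_complete Xh dh /\
     (forall (Y : Type) (rho : Y -> Y -> R), is_metric Y rho ->
        forall f : X -> Y, CBC_regular d rho f ->
        forall x : nat -> X, cofinally_Bourbaki_quasi_Cauchy d x ->
          cofinally_Bourbaki_Cauchy rho (fun n => f (x n))) in
  let P3 := cofinally_Bourbaki_complete Xh dh /\
     (forall f : X -> R, CBC_regular d real_dist f ->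
        forall x : nat -> X, cofinally_Bourbaki_quasi_Cauchy d x ->
          cofinally_Bourbaki_Cauchy real_dist (fun n => f (x n))) in
  let P4 := cofinally_Bourbaki_complete Xh dh /\
     (forall x : nat -> X, cofinally_Bourbaki_quasi_Cauchy d x ->
          cofinally_Bourbaki_Cauchy d x) in
  (P1 <-> P2) /\ (P1 <-> P3) /\ (P1 <-> P4).
Proof.
  cbv zeta. destruct hcomp as [hm [_ [hi hdense]]].
  pose proof (quasi_complete_complete Xh dh hm) as h1c.
  pose proof (CBqC_CBC_of_dense_quasi_complete X Xh d dh i hi hm hdense) as h14.
  pose proof (quasi_complete_of_dense_complete X Xh d dh i hi hd hm hdense) as h41.
  pose proof (CBqC_CBC_of_real_regular X d hd) as h34.
  split; [|split]; split.
  - intros H1. split; [exact (h1c H1)|]. intros Y rho _ f Hf x Hx. exact (Hf x (h14 x H1 Hx)).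
  - intros [Hc H2]. exact (h41 Hc (h34 (H2 R real_dist real_dist_metric))).
  - intros H1. split; [exact (h1c H1)|]. intros f Hf x Hx. exact (Hf x (h14 x H1 Hx)).
  - intros [Hc H3]. exact (h41 Hc (h34 H3)).
  - intros H1. split; [exact (h1c H1)|]. intros x Hx. exact (h14 x H1 Hx).
  - intros [Hc H4]. exact (h41 Hc H4).
Qed.
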